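(* Let $S=\{(a_i,b_i)\}_{i=1}^n\subset\mathbb R_{>0}\times\mathbb R_{\ge0}$ with $0<a_1<\cdots<a_n$, and let $f\in\mathbb R_{\ge0}[X]$ interpolate $S$ (i.e. $f(a_i)=b_i$ for all $i$). (1) If $\mathfrak d(f)+1\le n$, then $f$ is the unique polynomial in $\mathbb R_{\ge0}[X]$ interpolating $S$. (2) If $n\le\mathfrak d(f)$, then there are infinitely many polynomials in $\mathbb R_{\ge0}[X]$ interpolating $S$.
   Context: $\mathbb R_{\ge0}[X]$ is the set of real polynomials all of whose coefficients are nonnegative (CMPs). A finite sign sequence is $s=(s_i)_{i\in\omega}\in\{-,0,+\}^\omega$ with finitely many nonzero entries ($\omega=\{0,1,2,\dots\}$); $\mathscr S$ is their set and $\mathscr S_+=\mathscr S\cap\{0,+\}^\omega$. For $f=\sum_i c_iX^i$, $\mathrm{Sign}(f)=(\operatorname{sign}(c_i))_{i\in\omega}$. $\mathrm{SC}(t)$ is the number of pairs $i<j$ with $\{t_i,t_j\}=\{-,+\}$ and $t_k=0$ for all $i<k<j$. For $s\in\mathscr S_+$, $\mathfrak d(s)=\max\{\mathrm{SC}(t): t\in\mathscr S,\ t_i\in\{-,0,s_i\}\ \forall i\in\omega\}$, and for $f\in\mathbb R_{\ge0}[X]$, $\mathfrak d(f)=\mathfrak d(\mathrm{Sign}(f))$. *)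

From HB Require Import structures.
From mathcomp Require Import all_boot all_order all_algebra.
From mathcomp Require Import boolp classical_sets cardinality reals.
From Stdlib Require Import ClassicalEpsilon.
Set Implicit Arguments. Unset Strict Implicit. Unset Printing Implicit Defensive.
Import Order.TTheory GRing.Theory Num.Theory.
Local Open Scope ring_scope.

(* Finite sign sequences are represented by seq int with entries in
   {-1, 0, 1}; position i of the sequence is t_i, entries beyond the size are 0. *)

Definition CMP (R : realType) (f : {poly R}) : Prop := forall i : nat, 0 <= f`_i.

Definition Sign (R : realType) (f : {poly R}) : seq int := [seq sgz c | c <- f].

Definition sgn_opp (x y : int) : bool :=
  ((x == -1) && (y == 1)) || ((x == 1) && (y == -1)).

Definition SC (t : seq int) : nat :=
  (\sum_(0 <= i < size t) \sum_(0 <= j < size t)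
    [&& (i < j)%N, sgn_opp (nth (0:int) t i) (nth (0:int) t j) &
        all (fun k => nth (0:int) t k == (0:int)) (iota i.+1 (j - i.+1))])%N.

Definition admissible (s t : seq int) : Prop :=
  forall i : nat, nth 0 t i \in [:: -1; 0; nth 0 s i].

Definition is_dmax (s : seq int) (d : nat) : Prop :=
  (exists t, admissible s t /\ SC t = d) /\
  (forall t, admissible s t -> (SC t <= d)%N).

(* 𝔡(s): the maximum (chosen classically; it exists for s in S_+). *)
Definition dfrak (s : seq int) : nat :=
  epsilon (inhabits 0%N) (fun d => is_dmax s d).

Definition dfrakP (R : realType) (f : {poly R}) : nat := dfrak (Sign f).

Definition interpolates (R : realType) (n : nat) (a b : 'I_n -> R) (f : {poly R}) : Prop :=
  forall i : 'I_n, f.[a i] = b i.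

From HB Require Import structures.
From mathcomp Require Import all_boot all_order all_algebra.
From mathcomp Require Import boolp classical_sets cardinality reals.
From mathcomp Require Import zify lra polyorder polyrcf.
From Stdlib Require Import ClassicalEpsilon.
Set Implicit Arguments.
Unset Strict Implicit.
Unset Printing Implicit Defensive.
Import Order.TTheory GRing.Theory Num.Theory.
Local Open Scope ring_scope.

(* (1) If g <> f is another interpolant in R>=0[X], then f - g has the n positive roots a_i,
   and its sign sequence is admissible for Sign f (where f_i = 0, f_i - g_i = -g_i <= 0).
   Descartes' rule of signs gives n <= SC (Sign (f - g)) <= d(f), a contradiction.
   (2) Take an admissible t with SC t = d(f) >= n and keep n + 1 nonzero entries of t that
   alternate in sign. Some nonzero q supported on these n + 1 degrees vanishes at the a_i
   (n linear conditions); by Descartes its n + 1 coefficients alternate, so up to sign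
   they agree with those entries of t, and q can only be positive where f is. Then the
   f - e q, for all small e > 0, are infinitely many interpolants in R>=0[X]. *)

Lemma all2_nth (T S : Type) (x0 : T) (y0 : S) (r : T -> S -> bool)
    (s1 : seq T) (s2 : seq S) :
  size s1 = size s2 -> (forall j, (j < size s1)%N -> r (nth x0 s1 j) (nth y0 s2 j)) ->
  all2 r s1 s2.
Proof.
elim: s1 s2 => [|x s1 IH] [|y s2] //= [sz] r12.
by rewrite (r12 0%N) // IH // => j; apply: (r12 j.+1).
Qed.

Section SignSequences.
Implicit Types (x y z : int) (s t u : seq int).

Fixpoint first_nz (s : seq int) : int :=
  if s is x :: s' then (if x != 0 then x else first_nz s') else 0.

Fixpoint sgchanges (s : seq int) : nat :=
  if s is x :: s' then (sgn_opp x (first_nz s') + sgchanges s')%N else 0.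

Definition count_nz (s : seq int) : nat := count (fun x => x != 0) s.
Arguments count_nz : simpl never.

Lemma count_nz_cons x s : count_nz (x :: s) = ((x != 0) + count_nz s)%N.
Proof. by []. Qed.

(* [sgchanges s + (first_nz s != 0) <= count_nz s] always holds (sgchanges_count_nz), with
   equality exactly when consecutive nonzero entries of [s] have opposite signs. *)
Definition alternating (s : seq int) : bool :=
  (sgchanges s + (first_nz s != 0) == count_nz s)%N.

Definition is_sign (x : int) : bool := x \in [:: -1; 0; 1].

Lemma is_signP x : is_sign x -> [\/ x = -1, x = 0 | x = 1].
Proof.
by rewrite /is_sign !inE => /or3P[] /eqP ->; [apply: Or31 | apply: Or32 | apply: Or33].
Qed.

Lemma is_sign_sgz (R : realDomainType) (x : R) : is_sign (sgz x).
Proof. by rewrite /is_sign !inE; case: sgzP. Qed.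

Lemma sgn_oppr0 x : sgn_opp x 0 = false.
Proof. by rewrite /sgn_opp !andbF. Qed.

Lemma sgn_opp0r x : sgn_opp 0 x = false.
Proof. by []. Qed.

Lemma sgn_oppP x y : sgn_opp x y -> x = - y /\ x != 0.
Proof. by case/orP=> /andP[/eqP -> /eqP ->]. Qed.

Lemma sgn_opp_le x y : (sgn_opp x y <= (y != 0))%N.
Proof. by case: (boolP (sgn_opp x y)) => // /sgn_oppP[->]; rewrite oppr_eq0 => ->. Qed.

Lemma sgn_opp_signs x z : is_sign x -> is_sign z -> x != 0 ->
  sgn_opp x z = (z != 0) && (z != x).
Proof. by case/is_signP=> ->; case/is_signP=> ->. Qed.

Lemma all_iotaS (P : pred nat) m n :
  all P (iota m.+1 n) = all (fun k => P k.+1) (iota m n).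
Proof. by elim: n m => [|n IH] m //=; rewrite IH. Qed.

Lemma sum_sgn_opp_first_nz x t :
  (\sum_(0 <= j < size t) (sgn_opp x (nth (0 : int) t j) &&
      all (fun k => nth (0 : int) t k == 0) (iota 0 j)))%N = sgn_opp x (first_nz t).
Proof.
elim: t => [|y t IH]; first by rewrite big_geq //= sgn_oppr0.
rewrite /= big_nat_recl //= andbT.
under eq_bigr => j _ do rewrite /= all_iotaS /=.
have [->|yn0] := eqVneq y 0; first by rewrite IH /= sgn_oppr0.
by rewrite big1 ?addn0 // => j _; rewrite andbF.
Qed.

Lemma SC_cons x t : SC (x :: t) = (sgn_opp x (first_nz t) + SC t)%N.
Proof.
rewrite /SC /= big_nat_recl //= big_nat_recl //= add0n -sum_sgn_opp_first_nz.
congr (_ + _)%N; first by apply: eq_bigr => j _; rewrite /= subn1 all_iotaS.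
apply: eq_bigr => i _; rewrite big_nat_recl //= add0n.
by apply: eq_bigr => j _; rewrite /= ltnS subSS all_iotaS.
Qed.

Lemma SC_sgchanges t : SC t = sgchanges t.
Proof. by elim: t => [|x t IH]; [rewrite /SC big_geq | rewrite SC_cons IH]. Qed.

Lemma first_nz_eq0 u : (first_nz u == 0) = (count_nz u == 0%N).
Proof.
elim: u => [|x u IH] //=; rewrite /count_nz /=.
by have [->|xn0] := eqVneq x 0; rewrite /= ?add0n -?IH // add1n (negbTE xn0).
Qed.

Lemma sgchanges_count_nz u : (sgchanges u + (first_nz u != 0) <= count_nz u)%N.
Proof.
elim: u => [|x u IH] //; rewrite count_nz_cons /=.
have [->|xn0] := eqVneq x 0; first by rewrite sgn_opp0r.
have := sgn_opp_le x (first_nz u); rewrite xn0 /=; lia.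
Qed.

Lemma sgchanges_first_nz0 u : first_nz u = 0 -> sgchanges u = 0%N.
Proof.
move/eqP; rewrite first_nz_eq0 => /eqP u0.
by have := sgchanges_count_nz u; rewrite u0 leqn0 addn_eq0 => /andP[/eqP].
Qed.

Lemma count_nz_le u t : all2 (fun x y => (y == 0) ==> (x == 0)) u t ->
  (count_nz u <= count_nz t)%N.
Proof.
elim: t u => [|y t IH] [|x u] // /andP[xy /IH le_ut]; rewrite !count_nz_cons.
have [y0|yn0] := eqVneq y 0; first by move: xy; rewrite y0 eqxx => /eqP ->.
by rewrite leq_add // leq_b1.
Qed.

Lemma count_eq1_admissible s t :
  admissible s t -> (count (pred1 (1 : int)) t <= size s)%N.
Proof.
move=> ad; rewrite -(cat_take_drop (size s) t) count_cat.
have -> : count (pred1 (1 : int)) (drop (size s) t) = 0%N.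
  apply/eqP; rewrite -leqn0 leqNgt -has_count; apply/hasP => -[x].
  move=> /(nthP 0) [k kl <-]; rewrite nth_drop.
  have := ad (size s + k)%N; rewrite [nth _ s _]nth_default ?leq_addr //.
  by rewrite !inE => /or3P[] /eqP ->.
by rewrite addn0 (leq_trans (count_size _ _)) // size_take; case: ltnP => // /ltnW.
Qed.

(* Each sign change involves an entry [1], and each [1] takes part in at most two. *)
Lemma sgchanges_le_count_eq1 t :
  (sgchanges t + (first_nz t == 1) <= 2 * count (pred1 (1 : int)) t)%N.
Proof.
elim: t => [|x t IH] //=.
have [->|xn0] := eqVneq x 0; first by rewrite sgn_opp0r.
rewrite /=; set z := first_nz t in IH *.
have [->|xn1] := eqVneq x 1.
  move: IH; rewrite /sgn_opp /=; set v := sgchanges t; set c := count _ t.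
  by have [->|_] := eqVneq z 1; case: (z == -1) => /=; lia.
have : (sgn_opp x z <= (z == 1))%N.
  by rewrite /sgn_opp (negbTE xn1) orbF; case: (x == -1).
move: IH; set v := sgchanges t; set c := count _ t.
case: (z == 1); case: (sgn_opp x z) => /=; lia.
Qed.

Lemma dfrak_spec s : is_dmax s (dfrak s).
Proof.
apply: epsilon_spec.
pose achieved d := `[< exists t, admissible s t /\ SC t = d >].
have ex0 : exists d, achieved d.
  exists 0%N; apply/asboolP; exists [::]; rewrite SC_sgchanges.
  by split=> // i; rewrite nth_nil !inE eqxx orbT.
have ub d : achieved d -> (d <= 2 * size s)%N.
  move=> /asboolP[t [ad <-]]; rewrite SC_sgchanges.
  apply: leq_trans (leq_trans (leq_addr _ _) (sgchanges_le_count_eq1 t)) _.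
  by rewrite leq_mul2l count_eq1_admissible ?orbT.
have [d /asboolP dP dmax] := ex_maxnP ex0 ub.
by exists d; split=> // t ad; apply: dmax; apply/asboolP; exists t.
Qed.

Lemma admissible_is_sign s t : all is_sign s -> admissible s t -> all is_sign t.
Proof.
move=> ss ad; apply/(all_nthP 0) => j _.
have s_j : is_sign (nth 0 s j).
  have [js|sj] := ltnP j (size s); first exact: (allP ss) _ (mem_nth 0 js).
  by rewrite nth_default.
by have := ad j; rewrite !inE => /or3P[] /eqP ->.
Qed.

Lemma alternating0 u : alternating (0 :: u) = alternating u.
Proof. by rewrite /alternating /count_nz /=. Qed.

Lemma alternating_cons x u : x != 0 ->
  alternating (x :: u) =
  (sgn_opp x (first_nz u) == (first_nz u != 0)) && alternating u.
Proof.
move=> xn0; rewrite /alternating !count_nz_cons /= xn0 /=.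
have := sgn_opp_le x (first_nz u); have := sgchanges_count_nz u.
rewrite /count_nz; case: (sgn_opp _ _); case: (first_nz u != 0) => //=; lia.
Qed.

Lemma first_nz_opp t : first_nz (map -%R t) = - first_nz t.
Proof. by elim: t => //= x t ->; rewrite oppr_eq0; case: eqVneq. Qed.

Lemma opp_first_nz0 t : first_nz t = 0 -> map -%R t = t.
Proof.
elim: t => //= x t IH; have [->|xn0] := eqVneq x 0 => /=.
  by move/IH ->; rewrite oppr0.
by move=> x0; rewrite x0 eqxx in xn0.
Qed.


Lemma is_sign_first_nz t : all is_sign t -> is_sign (first_nz t).
Proof. by elim: t => //= x t IH /andP[sx /IH st]; case: ifP. Qed.

Lemma alternating_eq u t :
  all2 (fun x y => (y == 0) ==> (x == 0)) u t -> all is_sign u -> all is_sign t ->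
  (count_nz t <= count_nz u)%N -> alternating u -> alternating t ->
  u = t \/ u = map -%R t.
Proof.
elim: t u => [|y t IH] [|x u] //; first by left.
move=> /andP[xy sub] /andP[sx su] /andP[sy st].
have le_ut := count_nz_le sub; rewrite !count_nz_cons.
have [y0|yn0] := eqVneq y 0.
  move: xy; rewrite y0 eqxx => /eqP -> /= le_tu; rewrite !alternating0 => alt_u alt_t.
  by case: (IH u sub su st le_tu alt_u alt_t) => ->; [left | right; rewrite /= oppr0].
have [x0|xn0] := eqVneq x 0.
  by rewrite x0 /= add1n => /leq_trans/(_ le_ut); rewrite ltnn.
rewrite /= leq_add2l => le_tu.
rewrite !alternating_cons // => /andP[/eqP ox alt_u] /andP[/eqP oy alt_t].
have {}IH := IH u sub su st le_tu alt_u alt_t.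
have [tz|tnz] := eqVneq (first_nz t) 0.
  have mt := opp_first_nz0 tz.
  have -> : u = t by case: IH => ->.
  rewrite /= mt.
  case/is_signP: sx xn0 => -> // _; case/is_signP: sy yn0 => -> // _.
  - by left.
  - by right.
  - by right.
  - by left.
have unz : first_nz u != 0 by case: IH => ->; rewrite ?first_nz_opp ?oppr_eq0.
move: ox oy; rewrite unz tnz => /sgn_oppP[-> _] /sgn_oppP[-> _].
by case: IH => ->; [left | right; rewrite /= first_nz_opp opprK].
Qed.

Fixpoint pick_alt (k : nat) (prev : int) (t : seq int) : seq int :=
  if t is x :: t' then
    if [&& x != 0, x != prev & (0 < k)%N] then x :: pick_alt k.-1 x t'
    else 0 :: pick_alt k prev t'
  else [::].

Lemma nth_pick_alt k p t j :
  nth 0 (pick_alt k p t) j != 0 -> nth 0 (pick_alt k p t) j = nth 0 t j.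
Proof.
by elim: t k p j => [|x t IH] k p [|j] //=; case: ifP => _ //=; apply: IH.
Qed.

Lemma all_is_sign_pick_alt k p t : all is_sign t -> all is_sign (pick_alt k p t).
Proof.
elim: t k p => //= x t IH k p /andP[sx st].
by case: ifP => _ /=; rewrite IH // andbT.
Qed.

Lemma first_nz_pick_alt k p t :
  (first_nz (pick_alt k p t) == 0) || (first_nz (pick_alt k p t) != p).
Proof.
elim: t k p => //= x t IH k p.
by case: ifP => [/and3P[xn0 xnp _]|_] /=; rewrite ?xn0 ?xnp ?orbT ?IH.
Qed.

Lemma alternating_pick_alt k p t : all is_sign t -> alternating (pick_alt k p t).
Proof.
elim: t k p => //= x t IH k p /andP[sx st].
case: ifP => [/and3P[xn0 _ _]|_]; last by rewrite alternating0 IH.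
rewrite alternating_cons // IH // andbT.
have sz := is_sign_first_nz (all_is_sign_pick_alt k.-1 x st).
case/orP: (first_nz_pick_alt k.-1 x t) => [/eqP ->|znx]; first by rewrite sgn_oppr0.
by rewrite sgn_opp_signs // znx andbT.
Qed.

Lemma count_nz_pick_alt k p t : all is_sign t ->
  count_nz (pick_alt k p t) =
  minn k (sgchanges t + ((first_nz t != 0) && (first_nz t != p))).
Proof.
elim: t k p => [|x t IH] k p; first by rewrite minn0.
case/andP=> sx st /=.
have [->|xn0] := eqVneq x 0; first by rewrite /= count_nz_cons IH.
rewrite (sgn_opp_signs _ (is_sign_first_nz st)) // xn0 /=.
have [<-|xnp] := eqVneq x p.
  by rewrite /= count_nz_cons IH // eqxx add0n addn0 addnC.
case: k => [|k] /=; first by rewrite count_nz_cons IH // !min0n.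
by rewrite count_nz_cons xn0 IH // addn1 add1n minnSS addnC.
Qed.

Lemma count_nz_pick_alt_sgchanges n t : all is_sign t -> (0 < n <= sgchanges t)%N ->
  count_nz (pick_alt n.+1 0 t) = n.+1.
Proof.
move=> st /andP[n_gt0 nt]; rewrite count_nz_pick_alt //.
have -> : first_nz t != 0.
  apply: contraTneq n_gt0 => /sgchanges_first_nz0 t0.
  by move: nt; rewrite t0 leqn0 => /eqP ->.
by rewrite addn1; apply/minn_idPl; rewrite ltnS.
Qed.

Lemma first_nz_cat_nseq0 s k : first_nz (s ++ nseq k 0) = first_nz s.
Proof. by elim: s => [|x s IH] /=; [elim: k | rewrite IH]. Qed.

Lemma sgchanges_cat_nseq0 s k : sgchanges (s ++ nseq k 0) = sgchanges s.
Proof.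
elim: s => [|x s IH] /=; last by rewrite first_nz_cat_nseq0 IH.
by apply: sgchanges_first_nz0; elim: k.
Qed.

Lemma nth_cat_nseq0 s k j : nth 0 (s ++ nseq k 0) j = nth 0 s j.
Proof.
rewrite nth_cat nth_nseq; case: ltnP => // /(nth_default 0) ->.
by case: ifP.
Qed.

Lemma nth_opp s j : nth 0 (map -%R s) j = - nth 0 s j.
Proof.
have [js|sj] := ltnP j (size s); first by rewrite (nth_map 0).
by rewrite !nth_default ?size_map // oppr0.
Qed.

End SignSequences.

Section Descartes.
Variable R : realType.
Implicit Types p q : {poly R}.

Lemma size_Sign p : size (Sign p) = size p.
Proof. exact: size_map. Qed.

Lemma nth_Sign p i : nth 0 (Sign p) i = sgz p`_i.
Proof.
have [ip|pi] := ltnP i (size p); first by rewrite (nth_map 0).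
by rewrite !nth_default ?size_Sign // sgz0.
Qed.

Lemma all_is_sign_Sign p : all is_sign (Sign p).
Proof. by apply/allP => _ /mapP[c _ ->]; apply: is_sign_sgz. Qed.

Lemma first_nz_Sign_neq0 p : p != 0 -> first_nz (Sign p) != 0.
Proof.
move=> pn0; rewrite first_nz_eq0 /count_nz count_map -lt0n -has_count.
apply/hasP; exists (lead_coef p); last by rewrite /= sgz_eq0 lead_coef_eq0.
by rewrite /lead_coef mem_nth // prednK // lt0n size_poly_eq0.
Qed.

Lemma Sign_deriv p : p != 0 -> Sign p = sgz p`_0 :: Sign p^`().
Proof.
move=> pn0; apply: (@eq_from_nth _ 0).
  by rewrite /= !size_Sign size_deriv prednK // lt0n size_poly_eq0.
case=> [|i] _; rewrite /= !nth_Sign // coef_deriv -mulr_natr sgzM.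
by rewrite [sgz _%:R]gtr0_sgz ?mulr1 // ltr0Sn.
Qed.

Lemma Sign_mulX p : p != 0 -> Sign (p * 'X) = 0 :: Sign p.
Proof. by move=> pn0; rewrite /Sign polyseqMX //= sgz0. Qed.

Lemma mulX_of_coef0 p : p`_0 = 0 -> exists q, p = q * 'X.
Proof.
move=> p0; have /factor_theorem[q ->] : root p 0 by rewrite rootE horner_coef0 p0.
by exists q; rewrite subr0.
Qed.

Lemma size_mulX_lt p q : p = q * 'X -> p != 0 -> q != 0 /\ (size q < size p)%N.
Proof.
move=> -> pq0; have qn0 : q != 0 by apply: contraNneq pq0 => ->; rewrite mul0r.
by rewrite size_mulX.
Qed.

(* Intermediate value theorem on [0, c], once the powers of ['X] dividing [p] are removed. *)
Lemma root_of_sign_change p c : 0 < c -> (first_nz (Sign p))%:~R * p.[c] < 0 ->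
  exists2 x, 0 < x < c & root p x.
Proof.
move=> c0; elim: {p}(size p) {-2}p (leqnn (size p)) => [|n IH] p.
  by rewrite leqn0 size_poly_eq0 => /eqP ->; rewrite horner0 mulr0 ltxx.
move=> szp sgn_pc.
have pn0 : p != 0 by apply: contraTneq sgn_pc => ->; rewrite horner0 mulr0 ltxx.
have [p0|p0] := eqVneq p`_0 0.
  have [q pE] := mulX_of_coef0 p0; have [qn0 szq] := size_mulX_lt pE pn0.
  move: sgn_pc; rewrite pE Sign_mulX // hornerMX mulrA pmulr_llt0 // => sgn_qc.
  have [|x xc rx] := IH q _ sgn_qc; first by rewrite -ltnS (leq_trans szq).
  by exists x => //; rewrite rootE hornerMX (eqP rx) mul0r.
move: sgn_pc; rewrite Sign_deriv //= sgz_eq0 p0 -sgrEz => sgn_pc.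
have p0c : p.[0] * p.[c] < 0.
  by rewrite horner_coef0 [p`_0]numEsg mulrAC pmulr_llt0 // normr_gt0.
have [x /andP[]] := poly_ivtoo (ltW c0) p0c.
by rewrite !bnd_simp => x0 xc rx; exists x; rewrite ?x0.
Qed.

Lemma path_ltr_trans (c z : R) (s : seq R) : c < z -> path <%R z s -> path <%R c s.
Proof. by case: s => //= d s cz /andP[zd ->]; rewrite (lt_trans cz zd). Qed.

Lemma roots_deriv_between p (y : R) (s : seq R) :
  path <%R y s -> root p y -> all (root p) s ->
  exists s', [/\ size s' = size s, path <%R y s' & all (root p^`()) s'].
Proof.
elim: s y => [|z s IH] y; first by exists [::].
move=> /= /andP[yz zs] ry /andP[rz rs].
have [s' [sz zs' rs']] := IH z zs rz rs.
have [c /andP[]] := poly_rolle yz (etrans (eqP ry) (esym (eqP rz))).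
rewrite !bnd_simp => yc cz p'c.
exists (c :: s'); split => /=; rewrite ?sz ?yc ?(path_ltr_trans cz) //.
by rewrite rootE p'c eqxx.
Qed.

(* By the mean value theorem on [0, r], [p^`()] takes somewhere in ]0, r[ the sign
   opposite to [p`_0], which is also the sign of its own lowest coefficient. *)
Lemma deriv_root_before p r : p`_0 != 0 -> p^`() != 0 -> 0 < r -> root p r ->
  ~~ sgn_opp (sgz p`_0) (first_nz (Sign p^`())) ->
  exists2 x, 0 < x < r & root p^`() x.
Proof.
move=> p0 p'n0 r0 rr no_change.
have [c /andP[]] := poly_mvt p r0; rewrite !bnd_simp => c0 cr.
rewrite (eqP rr) horner_coef0 subr0 sub0r => p'c.
have same_sign : first_nz (Sign p^`()) = sgz p`_0.
  have sp0 : sgz p`_0 != 0 by rewrite sgz_eq0.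
  move: no_change (first_nz_Sign_neq0 p'n0) sp0.
  by case/is_signP: (is_sign_first_nz (all_is_sign_Sign p^`())) => ->;
    case/is_signP: (is_sign_sgz p`_0) => ->.
have [x /andP[x0 xc] rx] : exists2 x, 0 < x < c & root p^`() x.
  apply: root_of_sign_change => //; rewrite same_sign -sgrEz.
  have -> : p^`().[c] = - p`_0 / r by rewrite p'c mulrK // unitfE gt_eqF.
  by rewrite mulNr mulrN mulrA -normrEsg oppr_lt0 divr_gt0 // normr_gt0.
by exists x; rewrite ?x0 ?(lt_trans xc cr).
Qed.

Theorem descartes p (s : seq R) : p != 0 -> path <%R 0 s -> all (root p) s ->
  (size s <= sgchanges (Sign p))%N.
Proof.
elim: {p}(size p) {-2}p s (leqnn (size p)) => [|n IH] p s.
  by rewrite leqn0 size_poly_eq0 => /eqP ->; rewrite eqxx.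
move=> szp pn0 ps rs.
have [p0|p0] := eqVneq p`_0 0.
  have [q pE] := mulX_of_coef0 p0; have [qn0 szq] := size_mulX_lt pE pn0.
  rewrite pE Sign_mulX //; apply: IH => //; first by rewrite -ltnS (leq_trans szq).
  apply/allP => x xs; have := allP rs x xs; rewrite pE rootE hornerMX mulf_eq0.
  have x0 : 0 < x by move: ps xs => /(order_path_min lt_trans) /allP h /h.
  by rewrite (gt_eqF x0) orbF.
case: s ps rs => [|r s] //= /andP[r0 ps] /andP[rr rs].
have p'n0 : p^`() != 0.
  apply: contraNneq p0 => p'0; have := size_deriv p; rewrite p'0 size_poly0.
  move/esym/eqP; rewrite -subn1 subn_eq0 => /size1_polyC pE.
  by move: rr; rewrite pE rootC coefC.
have szp' : (size p^`() <= n)%N by rewrite -ltnS (leq_trans (lt_size_deriv pn0)).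
(* Rolle gives [size s] roots of [p^`()] beyond [r]; one more sign change of [p] or one
   more root of [p^`()] below [r] accounts for the root [r] itself. *)
have [s' [ss' rs' r's']] := roots_deriv_between ps rr rs.
rewrite Sign_deriv //=.
case: (boolP (sgn_opp _ _)) => [_|no_change].
  by rewrite add1n ltnS -ss' IH // (path_ltr_trans r0).
have [x /andP[x0 xr] rx] := deriv_root_before p0 p'n0 r0 rr no_change.
rewrite add0n -ss' -/(size (x :: s')) IH //= ?rx ?x0 //.
exact: path_ltr_trans xr rs'.
Qed.

Lemma roots_le_sgchanges n (a : 'I_n -> R) p :
  (forall i, 0 < a i) -> (forall i j : 'I_n, (i < j)%N -> a i < a j) ->
  (forall i, root p (a i)) -> p != 0 -> (n <= sgchanges (Sign p))%N.
Proof.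
move=> a_gt0 a_incr pa pn0.
have a_inj : injective a.
  move=> i j aij; apply/val_inj; have [ij|ji|//] := ltngtP i j.
  - by have := a_incr _ _ ij; rewrite aij ltxx.
  - by have := a_incr _ _ ji; rewrite aij ltxx.
pose s := sort <=%R [seq a i | i <- enum 'I_n].
have -> : n = size s by rewrite size_sort size_map size_enum_ord.
apply: descartes => //.
  rewrite path_sortedE; last exact: lt_trans.
  apply/andP; split; first by apply/allP => x; rewrite mem_sort => /mapP[i _ ->].
  rewrite lt_sorted_uniq_le sort_uniq map_inj_uniq ?enum_uniq // sort_sorted //.
  exact: le_total.
by apply/allP => x; rewrite mem_sort => /mapP[i _ ->].
Qed.

End Descartes.

Lemma exists_poly_roots_supported (F : fieldType) n (a : 'I_n -> F) (J : seq nat) :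
  uniq J -> (n < size J)%N ->
  exists2 q : {poly F}, q != 0 &
    (forall i, root q (a i)) /\ (forall j, q`_j != 0 -> j \in J).
Proof.
move=> uJ nJ.
pose A : 'M[F]_(size J, n) := \matrix_(k, i) a i ^+ nth 0%N J k.
have : kermx A != 0.
  rewrite kermx_eq0; apply: contraTN nJ => /eqP rkA.
  by rewrite -leqNgt -rkA rank_leq_col.
case/rowV0Pn => v /sub_kermxP vA /rV0Pn[k0 vk0].
pose q := \sum_(k < size J) v 0 k *: 'X^(nth 0%N J k).
have qE j : q`_j = \sum_(k < size J | nth 0%N J k == j) v 0 k by rewrite coef_sumMXn.
have qk0 : q`_(nth 0%N J k0) = v 0 k0.
  by rewrite qE (big_pred1 k0) // => k; rewrite /= nth_uniq.
exists q; last split.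
- by apply: contra_neq vk0 => q0; rewrite -qk0 q0 coef0.
- move=> i; rewrite rootE; have := congr1 (fun M : 'M_(1, n) => M 0 i) vA.
  rewrite !mxE => <-; rewrite horner_sum; apply/eqP/eq_bigr => k _.
  by rewrite hornerZ hornerXn mxE.
- move=> j; rewrite qE; apply: contraNT => jJ; rewrite big_pred0 // => k.
  by apply: contraNF jJ => /eqP <-; rewrite mem_nth.
Qed.

Section Interpolation.
Variable R : realType.
Implicit Types f g q : {poly R}.

Lemma admissible_Sign_sub f g : CMP f -> CMP g -> admissible (Sign f) (Sign (f - g)).
Proof.
move=> f_ge0 g_ge0 i; rewrite !nth_Sign coefB !inE.
have [f0|fp] := eqVneq f`_i 0.
  rewrite f0 sub0r sgzN; have [->|gn0] := eqVneq g`_i 0; first by rewrite sgz0 eqxx orbT.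
  by rewrite gtr0_sgz ?lt_def ?gn0 ?g_ge0 // eqxx.
rewrite [sgz f`_i]gtr0_sgz ?lt_def ?fp ?f_ge0 //.
by case: sgzP => _; rewrite eqxx ?orbT.
Qed.

Lemma interpolant_unique n (a b : 'I_n -> R) f :
  (forall i, 0 < a i) -> (forall i j : 'I_n, (i < j)%N -> a i < a j) ->
  CMP f -> interpolates a b f -> (dfrakP f + 1 <= n)%N ->
  forall g, CMP g -> interpolates a b g -> g = f.
Proof.
move=> a_gt0 a_incr f_ge0 fab dn g g_ge0 gab; apply/eqP; rewrite eq_sym -subr_eq0.
apply: contraTT dn => fg_neq0; rewrite -ltnNge addn1 ltnS.
have roots_fg i : root (f - g) (a i) by rewrite rootE !hornerE fab gab subrr.
apply: leq_trans (roots_le_sgchanges a_gt0 a_incr roots_fg fg_neq0) _.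
have [_ dmax] := dfrak_spec (Sign f).
by rewrite -SC_sgchanges; apply: dmax; apply: admissible_Sign_sub.
Qed.

Lemma admissible_coef_gt0 f t j : admissible (Sign f) t -> nth 0 t j = 1 -> 0 < f`_j.
Proof.
move=> ad tj1; have := ad j; rewrite tj1 nth_Sign -sgz_gt0.
by rewrite !inE => /or3P[] // /eqP <-.
Qed.

Lemma Sign_eq_alternating q ts :
  q != 0 -> all is_sign ts -> alternating ts ->
  (forall j, nth 0 ts j = 0 -> q`_j = 0) ->
  (count_nz ts <= (sgchanges (Sign q)).+1)%N ->
  (forall j, sgz q`_j = nth 0 ts j) \/ (forall j, sgz q`_j = - nth 0 ts j).
Proof.
move=> qn0 sts alt_ts q_supp cnt.
have szq : (size q <= size ts)%N by apply/leq_sizeP => j /(nth_default 0)/q_supp.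
pose us := Sign q ++ nseq (size ts - size q) 0.
have nth_us j : nth 0 us j = sgz q`_j by rewrite nth_cat_nseq0 nth_Sign.
have sub : all2 (fun x y => (y == 0) ==> (x == 0)) us ts.
  apply: (@all2_nth _ _ 0 0); first by rewrite size_cat size_nseq size_Sign subnKC.
  by move=> j _; rewrite nth_us; apply/implyP => /eqP/q_supp ->; rewrite sgz0.
have sus : all is_sign us.
  by rewrite all_cat all_is_sign_Sign all_nseq /is_sign !inE eqxx !orbT.
have us_nz : first_nz us != 0 by rewrite first_nz_cat_nseq0 first_nz_Sign_neq0.
have := sgchanges_count_nz us; rewrite us_nz sgchanges_cat_nseq0 addn1 => cnt_us.
have alt_us : alternating us.
  rewrite /alternating us_nz sgchanges_cat_nseq0 addn1 eqn_leq cnt_us.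
  exact: leq_trans (count_nz_le sub) cnt.
have [E|E] := alternating_eq sub sus sts (leq_trans cnt cnt_us) alt_us alt_ts.
  by left=> j; rewrite -nth_us E.
by right=> j; rewrite -nth_us E nth_opp.
Qed.

Lemma exists_alternating_pattern n f : (0 < n <= dfrakP f)%N ->
  exists ts, [/\ all is_sign ts, alternating ts, count_nz ts = n.+1
                & forall j, nth 0 ts j = 1 -> 0 < f`_j].
Proof.
move=> nd; have [[t [ad SCt]] _] := dfrak_spec (Sign f).
rewrite SC_sgchanges -/(dfrakP f) in SCt.
have st := admissible_is_sign (all_is_sign_Sign f) ad.
exists (pick_alt n.+1 0 t); split.
- exact: all_is_sign_pick_alt.
- exact: alternating_pick_alt.
- by rewrite count_nz_pick_alt_sgchanges // SCt.
- move=> j tsj; apply: (admissible_coef_gt0 ad).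
  by have := nth_pick_alt (k := n.+1) (p := 0) (t := t) (j := j); rewrite tsj => <-.
Qed.

Lemma exists_direction n (a : 'I_n -> R) f :
  (forall i, 0 < a i) -> (forall i j : 'I_n, (i < j)%N -> a i < a j) ->
  (n <= dfrakP f)%N ->
  exists2 q, q != 0 & (forall i, root q (a i)) /\ (forall j, 0 < q`_j -> 0 < f`_j).
Proof.
case: n a => [|n] a a_gt0 a_incr nd.
  exists (-1); rewrite ?oppr_eq0 ?oner_eq0 //; split=> [[]//|j].
  by rewrite coefN coef1 oppr_gt0 ltNge ler0n.
have [ts [sts alt_ts cnt_ts ts_pos]] := @exists_alternating_pattern n.+1 f nd.
pose J := [seq j <- iota 0 (size ts) | nth 0 ts j != 0].
have szJ : size J = n.+2.
  by rewrite size_filter -cnt_ts /count_nz -[in RHS](mkseq_nth 0 ts) count_map.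
have uJ : uniq J by rewrite filter_uniq ?iota_uniq.
have nJ : (n.+1 < size J)%N by rewrite szJ.
have [q qn0 [qa qJ]] := exists_poly_roots_supported a uJ nJ.
have q_supp j : nth 0 ts j = 0 -> q`_j = 0.
  by move=> tsj; apply/eqP; apply: contraT => /qJ; rewrite mem_filter tsj eqxx.
have cnt_q : (count_nz ts <= (sgchanges (Sign q)).+1)%N.
  by rewrite cnt_ts ltnS (roots_le_sgchanges a_gt0 a_incr qa qn0).
have [qts|qts] := Sign_eq_alternating qn0 sts alt_ts q_supp cnt_q.
  by exists q => //; split=> // j qj; apply: ts_pos; rewrite -qts gtr0_sgz.
exists (- q); rewrite ?oppr_eq0 //; split=> [i|j]; first by rewrite rootN.
rewrite coefN oppr_gt0 => qj; apply: ts_pos; apply: oppr_inj.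
by rewrite -qts ltr0_sgz.
Qed.

End Interpolation.

Local Open Scope classical_set_scope.

Section Perturbation.
Variable R : realType.
Implicit Types f q : {poly R}.

Lemma exists_scale_le_coef f q : CMP f -> (forall j, 0 < q`_j -> 0 < f`_j) ->
  exists2 e : R, 0 < e & forall j, e * q`_j <= f`_j.
Proof.
move=> f_ge0 qf.
suff [e e0 le_e] : exists2 e : R, 0 < e & forall j, (j < size q)%N -> e * q`_j <= f`_j.
  exists e => // j; have [/le_e //|qj] := ltnP j (size q).
  by rewrite nth_default // mulr0.
elim: (size q) => [|N [e e0 le_e]]; first by exists 1.
have [qN_gt0|qN_le0] := ltP 0 q`_N; last first.
  exists e => // j; rewrite ltnS leq_eqVlt => /orP[/eqP ->|/le_e //].
  by have := f_ge0 N; nra.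
pose e' := Num.min e (f`_N / q`_N).
have e'_gt0 : 0 < e' by rewrite lt_min e0 divr_gt0 ?qf.
exists e' => // j; rewrite ltnS leq_eqVlt => /orP[/eqP ->|jN].
  by rewrite -ler_pdivlMr // ge_min lexx orbT.
have := le_e j jN; have := f_ge0 j; have : e' <= e by rewrite ge_min lexx.
by have [qj_le0|qj_gt0] := leP q`_j 0; nra.
Qed.

Lemma infinite_interpolants n (a b : 'I_n -> R) f q :
  CMP f -> interpolates a b f -> q != 0 -> (forall i, root q (a i)) ->
  (forall j, 0 < q`_j -> 0 < f`_j) ->
  infinite_set [set g : {poly R} | CMP g /\ interpolates a b g].
Proof.
move=> f_ge0 fab qn0 qa qf; have [e e0 le_e] := exists_scale_le_coef f_ge0 qf.
pose F k := f - (e / k.+1%:R) *: q.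
have F_inj : injective F.
  move=> k k' /addrI/oppr_inj/eqP; rewrite -subr_eq0 -scalerBl scaler_eq0 (negbTE qn0).
  rewrite orbF subr_eq0 => /eqP/(mulfI (lt0r_neq0 e0))/invr_inj/eqP.
  by rewrite eqr_nat => /eqP[].
have F_sub : range F `<=` [set g | CMP g /\ interpolates a b g].
  move=> _ [k _ <-]; split=> [j|i].
    have ek_gt0 : 0 < e / k.+1%:R by rewrite divr_gt0 ?ltr0Sn.
    have ek_le : e / k.+1%:R <= e by rewrite ler_pdivrMr ?ler_peMr ?ler1n ?ltr0Sn ?ltW.
    rewrite coefB coefZ subr_ge0; have := le_e j; have := f_ge0 j.
    move: ek_gt0 ek_le; set ek := e / _ => ek_gt0 ek_le.
    by have [qj_le0|qj_gt0] := leP q`_j 0; nra.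
  by rewrite /F hornerD hornerN hornerZ (eqP (qa i)) mulr0 subr0 fab.
move=> fin; apply: infinite_nat.
have := sub_finite_set F_sub fin.
by rewrite (eq_finite_set (inj_card_eq (in2W F_inj))).
Qed.

End Perturbation.

Theorem mainTheorem3 (R : realType) (n : nat) (a b : 'I_n -> R) (f : {poly R}) :
  (forall i : 'I_n, 0 < a i) ->
  (forall i : 'I_n, 0 <= b i) ->
  (forall i j : 'I_n, (i < j)%N -> a i < a j) ->
  CMP f -> interpolates a b f ->
  ((dfrakP f + 1 <= n)%N ->
     forall g : {poly R}, CMP g -> interpolates a b g -> g = f) /\
  ((n <= dfrakP f)%N ->
     infinite_set [set g : {poly R} | CMP g /\ interpolates a b g]).
Proof.
move=> a_gt0 _ a_incr f_ge0 fab; split; first exact: interpolant_unique.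
move=> nd; have [q qn0 [qa qf]] := exists_direction a_gt0 a_incr nd.
exact: infinite_interpolants fab qn0 qa qf.
Qed.
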